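(* Let $f$ and $\tau$ be as in the context. Suppose that for some $x\in\mathbb T^1$, $n\in\mathbb N$ and inverse branches $h_1,h_2\in\mathcal H^n$ with $x$ in both their domains, $$DF^n_{h_1(x)}\mathcal K_\eta\cap DF^n_{h_2(x)}\mathcal K_\eta=\{0\}.$$ Then there exists $C_0=C_0(n,x)>0$ such that $|(\tau_n\circ h_1)'(x)-(\tau_n\circ h_2)'(x)|>C_0$.
   Context: $\alpha\in(0,1)$, $\mathbb T^1=\mathbb R/\mathbb Z$. $f:\mathbb T^1\to\mathbb T^1$ is piecewise $C^{1+\alpha}$ on a countable partition into open intervals, with inverse branches $\mathcal H^n$ of $f^n$, partition $\{O_h\}_{h\in\mathcal H^n}$, $h:f^n(O_h)\to O_h$, $|(f^n)'|\ge e^{\lambda n}$ with $\lambda>\ln2$. $\tau:\mathbb T^1\to\mathbb R$ is piecewise $C^1$ with $|(\tau_n\circ h)'|\le C_\tau$ for all $n$, $h\in\mathcal H^n$, where $\tau_n=\sum_{j<n}\tau\circ f^j$. $F(x,y)=(f(x),y+\tau(x))$, $DF_{(x,y)}=\begin{pmatrix}f'(x)&0\\\tau'(x)&1\end{pmatrix}$ (independent of $y$), $DF^n_x=DF_{f^{n-1}x}\cdots DF_x$. $\eta=\|\tau'/f'\|_\infty/(1-\|1/f'\|_\infty)$, $\mathcal K_\eta=\{(u,v):|v|\le\eta|u|\}$. *)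

From Stdlib Require Import Reals ZArith.
From Coquelicot Require Import Coquelicot.
Open Scope R_scope.

(* The circle T^1 = R/Z is modelled through lifts: a point of T^1 is
   represented by any real; maps T^1 -> T^1 are represented by functions
   R -> R with f (y+1) - f y an integer; functions T^1 -> R are 1-periodic. *)

Definition is_int (r : R) : Prop := exists k : Z, r = IZR k.

Fixpoint fiter (f : R -> R) (n : nat) (y : R) : R :=
  match n with O => y | S m => f (fiter f m y) end.

Fixpoint birkhoff (f tau : R -> R) (n : nat) (y : R) : R :=
  match n with O => 0 | S m => birkhoff f tau m y + tau (fiter f m y) end.

(* Partition of T^1 into the open arcs (a i, b i) (mod 1), i : I.
   Their lifts to R are the intervals (a i + k, b i + k), k : Z. *)
Definition in_piece {I : Type} (a b : I -> R) (i : I) (k : Z) (y : R) : Prop :=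
  a i + IZR k < y < b i + IZR k.

Definition in_pieces {I : Type} (a b : I -> R) (y : R) : Prop :=
  exists i k, in_piece a b i k y.

Definition null_set (A : R -> Prop) : Prop :=
  forall eps, 0 < eps -> exists c d : nat -> R,
    (forall m, c m <= d m) /\
    (forall y, A y -> exists m, c m < y < d m) /\
    (forall N, sum_n (fun m => d m - c m) N <= eps).

(* y lies in the domain of smoothness of f^n: f^j y is in a partition
   element for every j < n *)
Definition good {I : Type} (a b : I -> R) (f : R -> R) (n : nat) (y : R) : Prop :=
  forall j, (j < n)%nat -> in_pieces a b (fiter f j y).

(* y lies in the connected component of {good n} containing y0, i.e. in the
   (lift of the) element O_h of the partition of f^n containing y0 *)
Definition same_comp {I : Type} (a b : I -> R) (f : R -> R) (n : nat) (y0 y : R) : Prop :=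
  forall t, Rmin y0 y <= t <= Rmax y0 y -> good a b f n t.

(* z (mod 1) lies in f^n(O_h), where O_h is the component of y0 *)
Definition branch_dom {I : Type} (a b : I -> R) (f : R -> R) (n : nat) (y0 z : R) : Prop :=
  exists y, same_comp a b f n y0 y /\ is_int (fiter f n y - z).

(* h is the inverse branch h : f^n(O_h) -> O_h of f^n, O_h the component of y0 *)
Definition inv_branch {I : Type} (a b : I -> R) (f : R -> R) (n : nat) (y0 : R)
  (h : R -> R) : Prop :=
  forall z, branch_dom a b f n y0 z ->
    same_comp a b f n y0 (h z) /\ is_int (fiter f n (h z) - z).

Definition DF (f tau : R -> R) (y : R) (w : R * R) : R * R :=
  (Derive f y * fst w, Derive tau y * fst w + snd w).

Fixpoint DFn (f tau : R -> R) (n : nat) (y : R) (w : R * R) : R * R :=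
  match n with O => w | S m => DFn f tau m (f y) (DF f tau y w) end.

(* sup norm over the points where the (piecewise) functions are defined *)
Definition supnorm {I : Type} (a b : I -> R) (g : R -> R) : R :=
  real (Lub_Rbar (fun r => exists y, in_pieces a b y /\ r = Rabs (g y))).

Definition eta {I : Type} (a b : I -> R) (f tau : R -> R) : R :=
  supnorm a b (fun y => Derive tau y / Derive f y)
  / (1 - supnorm a b (fun y => / Derive f y)).

Definition cone (e : R) (w : R * R) : Prop := Rabs (snd w) <= e * Rabs (fst w).

(* Writing P_i = (f^n)'(h_i x) and S_i = (tau_n)'(h_i x), the chain rule gives
   DF^n_{h_i x} (u, 0) = (P_i u, S_i u), and the inverse function rule gives
   (tau_n o h_i)'(x) = S_i / P_i, with P_i <> 0 by expansion.  Since eta >= 0,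
   the horizontal vectors (1/P_i, 0) lie in K_eta and are mapped to (1, S_i/P_i).
   If the two derivatives agreed, this nonzero vector would lie in both image
   cones; hence they differ, and C_0 can be half their distance. *)
From Stdlib Require Import Reals ZArith Lra Lia.
From Coquelicot Require Import Coquelicot.
Open Scope R_scope.

Lemma continuity_pt_ball g y : continuity_pt g y -> forall eps, 0 < eps ->
  exists d, 0 < d /\ forall z, Rabs (z - y) < d -> Rabs (g z - g y) < eps.
Proof.
  intros Hg eps Heps. destruct (Hg eps Heps) as [d [Hd Hz]].
  exists d; split; auto. intros z Hzy.
  destruct (Req_dec z y) as [->|Hne].
  - rewrite Rminus_eq_0, Rabs_R0; auto.
  - apply (Hz z). repeat split; auto.
Qed.

Lemma intermediate_value (g : R -> R) p q c :
  (forall t, Rmin p q <= t <= Rmax p q -> continuity_pt g t) ->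
  Rmin (g p) (g q) <= c <= Rmax (g p) (g q) ->
  exists t, Rmin p q <= t <= Rmax p q /\ g t = c.
Proof.
  assert (Hordered : forall lo hi, lo < hi ->
    (forall t, lo <= t <= hi -> continuity_pt g t) ->
    Rmin (g lo) (g hi) <= c <= Rmax (g lo) (g hi) ->
    exists t, lo <= t <= hi /\ g t = c).
  { intros lo hi Hlt Hg Hc.
    destruct (Rle_dec (g lo) (g hi)) as [L|L].
    - rewrite Rmin_left, Rmax_right in Hc by lra.
      destruct (Ranalysis5.f_interv_is_interv g lo hi c Hlt Hc Hg) as [t Ht]. eauto.
    - rewrite Rmin_right, Rmax_left in Hc by lra.
      destruct (Ranalysis5.f_interv_is_interv (fun t => - g t) lo hi (- c) Hlt)
        as [t [Ht E]]; [lra | intros t Ht; apply continuity_pt_opp; auto |].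
      exists t. split; auto. lra. }
  intros Hg Hc.
  destruct (Rlt_le_dec p q) as [L|L]; [|destruct (Req_dec p q) as [<-|Hne]].
  - rewrite Rmin_left, Rmax_right in * by lra. auto.
  - exists p. rewrite Rmin_left, Rmax_left in * by lra. split; lra.
  - rewrite Rmin_right, Rmax_left in * by lra.
    rewrite Rmin_comm, Rmax_comm in Hc. apply Hordered; auto. lra.
Qed.

Section LocalInverse.

Variables (phi g : R -> R) (x y0 P r : R).
Hypothesis phi_derive : is_derive phi y0 P.
Hypothesis P_neq0 : P <> 0.
Hypothesis r_pos : 0 < r.
Hypothesis phi_continuous : forall y, Rabs (y - y0) < r -> continuity_pt phi y.
Hypothesis g_local_inverse : forall y, Rabs (y - y0) < r -> g (x + (phi y - phi y0)) = y.

Lemma local_inverse_surjective e : 0 < e -> exists delta, 0 < delta /\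
  forall d, Rabs d < delta -> exists y, Rabs (y - y0) < e /\ phi y = phi y0 + d.
Proof.
  intros He.
  assert (HAP : 0 < Rabs P) by (apply Rabs_pos_lt; auto).
  destruct (proj1 (is_derive_Reals _ _ _) phi_derive (Rabs P / 2) ltac:(lra)) as [dphi Hphi].
  pose proof (cond_pos dphi) as Hdphi.
  set (et := Rmin (Rmin e r) dphi / 2).
  assert (Het : 0 < et /\ et < e /\ et < r /\ et < dphi).
  { unfold et, Rmin; repeat destruct Rle_dec; lra. }
  (* On [y0 - et, y0 + et] the increments of phi have the sign of P and size at least |P| et / 2. *)
  assert (Hqp := Hphi et ltac:(lra) ltac:(rewrite Rabs_right; lra)).
  assert (Hqm := Hphi (- et) ltac:(lra) ltac:(rewrite Rabs_left; lra)).
  set (qp := (phi (y0 + et) - phi y0) / et) in Hqp.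
  set (qm := (phi (y0 + - et) - phi y0) / - et) in Hqm.
  assert (Ep : phi (y0 + et) = phi y0 + qp * et) by (unfold qp; field; lra).
  assert (Em : phi (y0 - et) = phi y0 - qm * et).
  { replace (y0 - et) with (y0 + - et) by ring. unfold qm; field; lra. }
  exists (Rabs P * et / 2). split; [nra|].
  intros d Hd.
  destruct (intermediate_value phi (y0 - et) (y0 + et) (phi y0 + d)) as [y [Hy E]].
  - intros t Ht. apply phi_continuous.
    rewrite Rmin_left, Rmax_right in Ht by lra. apply Rabs_def1; lra.
  - rewrite Ep, Em. apply Rabs_def2 in Hqp, Hqm, Hd.
    destruct (Rlt_or_le 0 P).
    + rewrite Rabs_right in Hqp, Hqm, Hd by lra.
      assert (qp * et > P * et / 2) by nra. assert (qm * et > P * et / 2) by nra.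
      rewrite Rmin_left, Rmax_right by lra. lra.
    + rewrite Rabs_left1 in Hqp, Hqm, Hd by lra.
      assert (qp * et < P * et / 2) by nra. assert (qm * et < P * et / 2) by nra.
      rewrite Rmin_right, Rmax_left by lra. lra.
  - rewrite Rmin_left, Rmax_right in Hy by lra.
    exists y. split; auto. apply Rabs_def1; lra.
Qed.

Lemma is_derive_local_inverse : is_derive g x (/ P).
Proof.
  assert (Hgx : g x = y0).
  { rewrite <- (g_local_inverse y0) by (rewrite Rminus_eq_0, Rabs_R0; lra).
    f_equal. ring. }
  apply is_derive_Reals. intros eps Heps.
  assert (Hinv : continuity_pt (fun q => / q) P).
  { apply (continuity_pt_inv (fun q => q)); auto. apply continuity_pt_id. }
  destruct (continuity_pt_ball _ _ Hinv eps Heps) as [gam [Hgam Hgam_inv]].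
  destruct (proj1 (is_derive_Reals _ _ _) phi_derive gam Hgam) as [dphi Hphi].
  destruct (local_inverse_surjective (Rmin r dphi)) as [delta [Hdelta Hsurj]].
  { apply Rmin_pos; auto. apply cond_pos. }
  exists (mkposreal delta Hdelta). intros d Hd0 Hd.
  destruct (Hsurj d Hd) as [y [Hy Ephi]].
  assert (Hyr : Rabs (y - y0) < r) by (pose proof (Rmin_l r dphi); lra).
  assert (Hyd : Rabs (y - y0) < dphi) by (pose proof (Rmin_r r dphi); lra).
  replace (x + d) with (x + (phi y - phi y0)) by lra.
  rewrite g_local_inverse, Hgx by auto.
  assert (Hy0 : y - y0 <> 0) by (intro E; replace y with y0 in Ephi by lra; lra).
  (* The difference quotient of g is the reciprocal of that of phi. *)
  specialize (Hphi (y - y0) Hy0 Hyd).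
  replace (y0 + (y - y0)) with y in Hphi by ring.
  replace (phi y - phi y0) with d in * by lra.
  replace ((y - y0) / d) with (/ (d / (y - y0))) by (field; auto).
  apply Hgam_inv. exact Hphi.
Qed.

End LocalInverse.

Lemma fiter_S f m y : fiter f (S m) y = fiter f m (f y).
Proof. induction m as [|m IH]; simpl; auto. simpl in IH. rewrite IH. reflexivity. Qed.

Lemma birkhoff_S f tau m y : birkhoff f tau (S m) y = tau y + birkhoff f tau m (f y).
Proof.
  induction m as [|m IH]; [simpl; ring|].
  change (birkhoff f tau (S (S m)) y)
    with (birkhoff f tau (S m) y + tau (fiter f (S m) y)).
  rewrite IH, fiter_S. simpl. ring.
Qed.

Fixpoint dfiter (f : R -> R) (n : nat) (y : R) : R :=
  match n with O => 1 | S m => Derive f y * dfiter f m (f y) end.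

Fixpoint dbirkhoff (f tau : R -> R) (n : nat) (y : R) : R :=
  match n with O => 0 | S m => Derive tau y + Derive f y * dbirkhoff f tau m (f y) end.

Lemma DFn_eq f tau n y u v :
  DFn f tau n y (u, v) = (dfiter f n y * u, dbirkhoff f tau n y * u + v).
Proof.
  revert y u v; induction n as [|n IH]; intros y u v; simpl.
  - f_equal; ring.
  - unfold DF; simpl. rewrite IH. f_equal; ring.
Qed.

Lemma cone_horizontal e u : 0 <= e -> cone e (u, 0).
Proof.
  intros He. unfold cone; simpl. rewrite Rabs_R0.
  apply Rmult_le_pos; auto. apply Rabs_pos.
Qed.

Section PiecewiseDynamics.

Context {I : Type} (a b : I -> R) (f tau : R -> R).

Hypothesis piece_disjoint : forall i j k l y,
  in_piece a b i k y -> in_piece a b j l y -> i = j /\ k = l.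
Hypothesis f_derivable : forall i k y, in_piece a b i k y -> ex_derive f y.
Hypothesis tau_derivable : forall i k y, in_piece a b i k y -> ex_derive tau y.
Hypothesis f_inj_mod1 : forall i k y z, in_piece a b i k y -> in_piece a b i k z ->
  is_int (f y - f z) -> y = z.
Variable lambda : R.
Hypothesis f_expanding : forall n y, good a b f n y ->
  Rabs (Derive (fiter f n) y) >= exp (lambda * INR n).

Lemma good_S m y : good a b f (S m) y <-> in_pieces a b y /\ good a b f m (f y).
Proof.
  split.
  - intros H. split; [apply (H 0%nat); lia|].
    intros j Hj. rewrite <- fiter_S. apply H. lia.
  - intros [H1 H2] [|j] Hj; [exact H1|]. rewrite fiter_S. apply H2. lia.
Qed.

Lemma good_le n m y : (m <= n)%nat -> good a b f n y -> good a b f m y.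
Proof. intros Hle H j Hj. apply H. lia. Qed.

Lemma is_derive_fiter n y : good a b f n y -> is_derive (fiter f n) y (dfiter f n y).
Proof.
  revert y; induction n as [|n IH]; intros y Hg.
  - apply is_derive_Reals, derivable_pt_lim_id.
  - apply good_S in Hg. destruct Hg as [[i [k Hp]] Hg].
    apply is_derive_ext with (fun t => fiter f n (f t)); [intros t; symmetry; apply fiter_S|].
    simpl.
    exact (is_derive_comp _ _ _ _ _ (IH _ Hg) (Derive_correct _ _ (f_derivable _ _ _ Hp))).
Qed.

Lemma is_derive_birkhoff n y : good a b f n y ->
  is_derive (birkhoff f tau n) y (dbirkhoff f tau n y).
Proof.
  revert y; induction n as [|n IH]; intros y Hg.
  - apply is_derive_Reals, derivable_pt_lim_const.
  - apply good_S in Hg. destruct Hg as [[i [k Hp]] Hg].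
    apply is_derive_ext with (fun t => tau t + birkhoff f tau n (f t));
      [intros t; symmetry; apply birkhoff_S|].
    simpl.
    apply (is_derive_plus tau).
    + exact (Derive_correct _ _ (tau_derivable _ _ _ Hp)).
    + exact (is_derive_comp _ _ _ _ _ (IH _ Hg) (Derive_correct _ _ (f_derivable _ _ _ Hp))).
Qed.

Lemma dfiter_neq0 n y : good a b f n y -> dfiter f n y <> 0.
Proof.
  intros Hg E. pose proof (f_expanding n y Hg) as H.
  rewrite (is_derive_unique _ _ _ (is_derive_fiter n y Hg)), E, Rabs_R0 in H.
  pose proof (exp_pos (lambda * INR n)). lra.
Qed.

Lemma good_continuity_pt n y : good a b f n y -> continuity_pt (fiter f n) y.
Proof.
  intros Hg. apply derivable_continuous_pt. exists (dfiter f n y).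
  apply is_derive_Reals, is_derive_fiter, Hg.
Qed.

Lemma good_open n y : good a b f n y ->
  exists r, 0 < r /\ forall z, Rabs (z - y) < r -> good a b f n z.
Proof.
  revert y; induction n as [|n IH]; intros y Hg.
  - exists 1. split; [lra|]. intros z _ j Hj. lia.
  - apply good_S in Hg. destruct Hg as [[i [k Hp]] Hg].
    destruct (IH _ Hg) as [r [Hr Hball]].
    assert (Hcont : continuity_pt f y).
    { apply derivable_continuous_pt. exists (Derive f y).
      apply is_derive_Reals, Derive_correct, (f_derivable _ _ _ Hp). }
    destruct (continuity_pt_ball _ _ Hcont r Hr) as [s [Hs Hfs]].
    unfold in_piece in Hp.
    exists (Rmin s (Rmin (y - (a i + IZR k)) (b i + IZR k - y))).
    split; [repeat apply Rmin_pos; lra|].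
    intros z Hz. apply Rabs_def2 in Hz. apply good_S. split.
    + exists i, k. unfold in_piece. revert Hz. unfold Rmin; repeat destruct Rle_dec; lra.
    + apply Hball, Hfs, Rabs_def1; revert Hz; unfold Rmin; repeat destruct Rle_dec; lra.
Qed.

Lemma piece_ends_not_in_pieces i k y : in_piece a b i k y ->
  ~ in_pieces a b (a i + IZR k) /\ ~ in_pieces a b (b i + IZR k).
Proof.
  unfold in_pieces, in_piece. intros Hy.
  split; intros [j [l Hj]].
  - set (s := (a i + IZR k + Rmin (b i + IZR k) (b j + IZR l)) / 2).
    destruct (piece_disjoint i j k l s) as [<- <-]; [| |lra];
      unfold in_piece, s; revert Hy Hj; unfold Rmin; destruct Rle_dec; lra.
  - set (s := (Rmax (a i + IZR k) (a j + IZR l) + (b i + IZR k)) / 2).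
    destruct (piece_disjoint i j k l s) as [<- <-]; [| |lra];
      unfold in_piece, s; revert Hy Hj; unfold Rmax; destruct Rle_dec; lra.
Qed.

(* A connected set of good points is carried by f^j into a single piece:
   leaving a piece would make f^j hit one of its endpoints. *)
Lemma fiter_same_piece n j p q i k : (j < n)%nat ->
  (forall t, Rmin p q <= t <= Rmax p q -> good a b f n t) ->
  in_piece a b i k (fiter f j p) -> in_piece a b i k (fiter f j q).
Proof.
  intros Hj Hg Hp.
  destruct (piece_ends_not_in_pieces i k _ Hp) as [Ha Hb].
  assert (Hvalue : forall c, Rmin (fiter f j p) (fiter f j q) <= c <= Rmax (fiter f j p) (fiter f j q) ->
    in_pieces a b c).
  { intros c Hc.
    destruct (intermediate_value (fiter f j) p q c) as [t [Ht <-]]; auto.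
    - intros t Ht. apply good_continuity_pt. apply good_le with n; [lia|]. auto.
    - exact (Hg t Ht j Hj). }
  unfold in_piece in *.
  destruct (Rlt_le_dec (a i + IZR k) (fiter f j q)) as [L|L].
  - destruct (Rlt_le_dec (fiter f j q) (b i + IZR k)) as [U|U]; [lra|].
    exfalso. apply Hb, Hvalue. unfold Rmin, Rmax; destruct Rle_dec; lra.
  - exfalso. apply Ha, Hvalue. unfold Rmin, Rmax; destruct Rle_dec; lra.
Qed.

Lemma fiter_inj_mod1 n p q : (0 < n)%nat ->
  (forall t, Rmin p q <= t <= Rmax p q -> good a b f n t) ->
  is_int (fiter f n p - fiter f n q) -> p = q.
Proof.
  intros Hn Hg.
  assert (Hstep : forall j, (j < n)%nat ->
    is_int (fiter f (S j) p - fiter f (S j) q) -> fiter f j p = fiter f j q).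
  { intros j Hj Hint.
    destruct (Hg p ltac:(split; [apply Rmin_l | apply Rmax_l]) j Hj) as [i [k Hp]].
    exact (f_inj_mod1 i k _ _ Hp (fiter_same_piece n j p q i k Hj Hg Hp) Hint). }
  assert (Hinj : forall j, (j < n)%nat -> is_int (fiter f (S j) p - fiter f (S j) q) -> p = q).
  { induction j as [|j IH]; intros Hj Hint.
    - exact (Hstep 0%nat Hj Hint).
    - apply IH; [lia|]. exists 0%Z. rewrite (Hstep (S j) Hj Hint). simpl. ring. }
  destruct n as [|m]; [lia|].
  exact (Hinj m (Nat.lt_succ_diag_r m)).
Qed.

Lemma same_comp_good n y1 y : same_comp a b f n y1 y -> good a b f n y.
Proof. intros H. apply H. unfold Rmin, Rmax; destruct Rle_dec; lra. Qed.

Lemma same_comp_between n y1 p q :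
  same_comp a b f n y1 p -> same_comp a b f n y1 q ->
  forall t, Rmin p q <= t <= Rmax p q -> good a b f n t.
Proof.
  intros Hp Hq t Ht.
  destruct (Rle_dec (Rmin y1 p) t) as [L|L]; [destruct (Rle_dec t (Rmax y1 p)) as [U|U]|].
  - apply Hp; lra.
  - apply Hq. revert Ht U. unfold Rmin, Rmax; repeat destruct Rle_dec; lra.
  - apply Hq. revert Ht L. unfold Rmin, Rmax; repeat destruct Rle_dec; lra.
Qed.

Lemma same_comp_ball n y1 y0 r y : same_comp a b f n y1 y0 ->
  (forall z, Rabs (z - y0) < r -> good a b f n z) -> Rabs (y - y0) < r ->
  same_comp a b f n y1 y.
Proof.
  intros H0 Hball Hy t Ht.
  destruct (Rle_dec (Rmin y1 y0) t) as [L|L]; [destruct (Rle_dec t (Rmax y1 y0)) as [U|U]|].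
  - apply H0; lra.
  - apply Hball. apply Rabs_def2 in Hy. apply Rabs_def1;
      revert Ht U; unfold Rmin, Rmax; repeat destruct Rle_dec; lra.
  - apply Hball. apply Rabs_def2 in Hy. apply Rabs_def1;
      revert Ht L; unfold Rmin, Rmax; repeat destruct Rle_dec; lra.
Qed.

Lemma inv_branch_good n y1 h x :
  inv_branch a b f n y1 h -> branch_dom a b f n y1 x -> good a b f n (h x).
Proof. intros Hh Hx. exact (same_comp_good _ _ _ (proj1 (Hh x Hx))). Qed.

(* The integer in [is_int (fiter f n (h z) - z)] could a priori jump with z;
   injectivity of f^n mod 1 on O_h shows that near x it does not. *)
Lemma inv_branch_local_inverse m y1 h x :
  inv_branch a b f (S m) y1 h -> branch_dom a b f (S m) y1 x ->
  exists r, 0 < r /\ forall y, Rabs (y - h x) < r ->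
    good a b f (S m) y /\ h (x + (fiter f (S m) y - fiter f (S m) (h x))) = y.
Proof.
  intros Hh Hx.
  destruct (Hh x Hx) as [Hcomp0 [c Hc]].
  destruct (good_open _ _ (same_comp_good _ _ _ Hcomp0)) as [r [Hr Hball]].
  exists r. split; auto. intros y Hy. split; [auto|].
  set (z := x + (fiter f (S m) y - fiter f (S m) (h x))).
  assert (Hcomp_y : same_comp a b f (S m) y1 y) by (eapply same_comp_ball; eauto).
  assert (Hz : branch_dom a b f (S m) y1 z).
  { exists y. split; auto. exists c. unfold z. lra. }
  destruct (Hh z Hz) as [Hcomp_z [c' Hc']].
  apply (fiter_inj_mod1 (S m)); [lia | exact (same_comp_between _ _ _ _ Hcomp_z Hcomp_y) |].
  exists (c' - c)%Z. rewrite minus_IZR. unfold z in *. lra.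
Qed.

Lemma is_derive_inv_branch m y1 h x :
  inv_branch a b f (S m) y1 h -> branch_dom a b f (S m) y1 x ->
  is_derive h x (/ dfiter f (S m) (h x)).
Proof.
  intros Hh Hx.
  pose proof (inv_branch_good _ _ _ _ Hh Hx) as Hg.
  destruct (inv_branch_local_inverse m y1 h x Hh Hx) as [r [Hr Hloc]].
  apply (is_derive_local_inverse (fiter f (S m)) h x (h x) _ r).
  - exact (is_derive_fiter _ _ Hg).
  - exact (dfiter_neq0 _ _ Hg).
  - exact Hr.
  - intros y Hy. exact (good_continuity_pt _ _ (proj1 (Hloc y Hy))).
  - intros y Hy. exact (proj2 (Hloc y Hy)).
Qed.

Lemma Derive_birkhoff_inv_branch n y1 h x :
  inv_branch a b f n y1 h -> branch_dom a b f n y1 x ->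
  Derive (fun t => birkhoff f tau n (h t)) x = dbirkhoff f tau n (h x) / dfiter f n (h x).
Proof.
  intros Hh Hx. destruct n as [|m].
  - simpl. rewrite Derive_const. unfold Rdiv. ring.
  - pose proof (inv_branch_good _ _ _ _ Hh Hx) as Hg.
    apply is_derive_unique.
    pose proof (is_derive_comp _ _ _ _ _ (is_derive_birkhoff _ _ Hg)
                  (is_derive_inv_branch m y1 h x Hh Hx)) as H.
    unfold scal in H; simpl in H; unfold mult in H; simpl in H.
    unfold Rdiv. rewrite Rmult_comm. exact H.
Qed.

Lemma supnorm_nonneg g : 0 <= supnorm a b g.
Proof.
  unfold supnorm. set (E := fun r => _).
  destruct (Lub_Rbar_correct E) as [Hub Hlub].
  destruct (Lub_Rbar E) as [l| |]; simpl; try lra.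
  destruct (Rle_lt_dec 0 l) as [|Hl]; auto.
  (* a negative supremum of absolute values forces E to be empty *)
  assert (Hm : is_ub_Rbar E m_infty).
  { intros s [y [Hy ->]]. specialize (Hub _ (ex_intro _ y (conj Hy eq_refl))).
    simpl in Hub. pose proof (Rabs_pos (g y)). lra. }
  destruct (Hlub _ Hm).
Qed.

Lemma supnorm_le g M : 0 <= M ->
  (forall y, in_pieces a b y -> Rabs (g y) <= M) -> supnorm a b g <= M.
Proof.
  intros HM Hb. unfold supnorm. set (E := fun r => _).
  destruct (Lub_Rbar_correct E) as [_ Hlub].
  assert (H : is_ub_Rbar E M) by (intros r [y [Hy ->]]; simpl; auto).
  specialize (Hlub _ H).
  destruct (Lub_Rbar E) as [l| |]; simpl in *; lra.
Qed.

Lemma eta_nonneg : 0 < lambda -> 0 <= eta a b f tau.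
Proof.
  intros Hl0.
  assert (He : 1 < exp lambda) by (rewrite <- exp_0; apply exp_increasing; lra).
  assert (Hs : supnorm a b (fun y => / Derive f y) <= / exp lambda).
  { apply supnorm_le; [left; apply Rinv_0_lt_compat; lra|].
    intros y Hy.
    assert (Hg : good a b f 1 y) by (apply good_S; split; auto; intros j Hj; lia).
    pose proof (f_expanding 1%nat y Hg) as H. simpl in H. rewrite Rmult_1_r in H.
    rewrite Rabs_inv. apply Rinv_le_contravar; [lra | exact (Rge_le _ _ H)]. }
  assert (/ exp lambda < 1) by (rewrite <- Rinv_1; apply Rinv_lt_contravar; lra).
  unfold eta, Rdiv. apply Rmult_le_pos; [apply supnorm_nonneg|].
  left. apply Rinv_0_lt_compat. lra.
Qed.

End PiecewiseDynamics.

Theorem mainTheorem8 (alpha lambda C_tau : R) (I : Type) (a b : I -> R)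
  (f tau : R -> R)
  (Halpha : 0 < alpha < 1)
  (Hcount : exists enc : I -> nat, forall i j, enc i = enc j -> i = j)
  (Harc : forall i, a i < b i <= a i + 1)
  (Hdisj : forall i j k l y, in_piece a b i k y -> in_piece a b j l y -> i = j /\ k = l)
  (Hfull : null_set (fun y => ~ in_pieces a b y))
  (Hfper : forall y, is_int (f (y + 1) - f y))
  (Hfdiff : forall i k y, in_piece a b i k y -> ex_derive f y)
  (Hfhold : forall i k, exists C, 0 <= C /\ forall y z,
      in_piece a b i k y -> in_piece a b i k z ->
      Rabs (Derive f y - Derive f z) <= C * Rpower (Rabs (y - z)) alpha)
  (Hfinj : forall i k y z, in_piece a b i k y -> in_piece a b i k z ->
      is_int (f y - f z) -> y = z)
  (Hlam : ln 2 < lambda)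
  (Hexp : forall n y, good a b f n y -> Rabs (Derive (fiter f n) y) >= exp (lambda * INR n))
  (Htper : forall y, tau (y + 1) = tau y)
  (Htdiff : forall i k y, in_piece a b i k y -> ex_derive tau y /\ continuous (Derive tau) y)
  (Htau : forall n y0 h z, inv_branch a b f n y0 h -> branch_dom a b f n y0 z ->
      Rabs (Derive (fun t => birkhoff f tau n (h t)) z) <= C_tau)
  (x : R) (n : nat) (y1 y2 : R) (h1 h2 : R -> R)
  (Hh1 : inv_branch a b f n y1 h1) (Hh2 : inv_branch a b f n y2 h2)
  (Hx1 : branch_dom a b f n y1 x) (Hx2 : branch_dom a b f n y2 x)
  (Hcone : forall w,
      (exists u, cone (eta a b f tau) u /\ DFn f tau n (h1 x) u = w) ->
      (exists u, cone (eta a b f tau) u /\ DFn f tau n (h2 x) u = w) ->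
      w = (0, 0)) :
  exists C0, 0 < C0 /\
    Rabs (Derive (fun t => birkhoff f tau n (h1 t)) x
          - Derive (fun t => birkhoff f tau n (h2 t)) x) > C0.
Proof.
  pose proof (fun i k y H => proj1 (Htdiff i k y H)) as Htau_diff.
  assert (Hln2 : 0 < ln 2) by (rewrite <- ln_1; apply ln_increasing; lra).
  assert (He : 0 <= eta a b f tau) by (apply (eta_nonneg a b f tau lambda); auto; lra).
  rewrite (Derive_birkhoff_inv_branch a b f tau Hdisj Hfdiff Htau_diff Hfinj lambda Hexp
             n y1 h1 x Hh1 Hx1),
          (Derive_birkhoff_inv_branch a b f tau Hdisj Hfdiff Htau_diff Hfinj lambda Hexp
             n y2 h2 x Hh2 Hx2).
  pose proof (dfiter_neq0 a b f Hfdiff lambda Hexp n _ (inv_branch_good a b f _ _ _ _ Hh1 Hx1)) as HP1.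
  pose proof (dfiter_neq0 a b f Hfdiff lambda Hexp n _ (inv_branch_good a b f _ _ _ _ Hh2 Hx2)) as HP2.
  set (d1 := dbirkhoff f tau n (h1 x) / dfiter f n (h1 x)).
  set (d2 := dbirkhoff f tau n (h2 x) / dfiter f n (h2 x)).
  assert (Hne : d1 <> d2).
  { intro E. assert (H : (1, d1) = (0, 0)).
    { apply Hcone; [exists (/ dfiter f n (h1 x), 0) | exists (/ dfiter f n (h2 x), 0)];
        (split; [apply cone_horizontal; exact He|]); rewrite DFn_eq;
        [|rewrite E]; unfold d1, d2; f_equal; field; auto. }
    injection H. lra. }
  exists (Rabs (d1 - d2) / 2).
  assert (0 < Rabs (d1 - d2)) by (apply Rabs_pos_lt; lra).
  lra.
Qed.
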